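(* Introduce on $\mathbb R^2$ the coordinates $(\rho,\varphi)$ with $\varphi=2\pi t/T\in S^1$, $T=4\pi/f'(r_0)$, and $\rho\ge0$ defined by $\rho^2=4f(r)/f'(r_0)^2$, so that $\mathring g=\rho^2d\varphi^2+\frac{f'(r_0)^2}{f'(r(\rho))^2}d\rho^2+r(\rho)^2h_K$. Consider the one-parameter family $\mu\mapsto\mathring g_\mu$ of such metrics, written in the fixed coordinates $(\rho,\varphi,x)$ ($x\in N$), and the symmetric tensor $\frac{d\mathring g_\mu}{d\mu}$. Then $\frac{d\mathring g_\mu}{d\mu}\in L^2(M,\mathring g_\mu)$ if and only if $\frac{d}{d\mu}\big(f'(r_0)\big)=0$. This happens if and only if $K=1$ and $\mu=\mu_c:=\frac{n}{n+1}\big(\ell\sqrt{\tfrac{n-1}{n+1}}\big)^{n-1}$ (equivalently $r_0=\ell\sqrt{\frac{n-1}{n+1}}$); for $K\in\{0,-1\}$ the variation is never in $L^2$.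
   Context: Fix an integer $n\ge2$, constants $\ell>0$, $K\in\{-1,0,1\}$, $\mu\in\mathbb R$. Let $(N,h_K)$ be a closed $n$-dimensional Riemannian manifold of constant sectional curvature $K$. Set $f(r)=\frac{r^2}{\ell^2}+K-\frac{2\mu}{r^{n-1}}$. Assume $\mu>0$ if $K\in\{0,1\}$ and $\mu>\mu_{\min}:=-\frac{1}{n+1}\big(\frac{n+1}{\ell^2(n-1)}\big)^{\frac{1-n}{2}}$ if $K=-1$; then $f$ has a largest positive zero $r_0$ (depending on $\mu$), which is simple, and $f>0$, $f'>0$ on $(r_0,\infty)$. The Riemannian Kottler metric is $\mathring g=f(r)\,dt^2+f(r)^{-1}dr^2+r^2h_K$ on $M=\mathbb R^2\times N$, $r\in[r_0,\infty)$, $t$ periodic with period $4\pi/f'(r_0)$, $(r,t)$ polar-type coordinates on $\mathbb R^2$ centred at $r=r_0$. *)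

From Stdlib Require Import Reals Lra ZArith.
Open Scope R_scope.

(* Kottler data: n = dim N, l = AdS radius, K = curvature of N (as an integer), m = mass mu. *)

Definition kf (n : nat) (l : R) (K : Z) (m r : R) : R :=
  r ^ 2 / l ^ 2 + IZR K - 2 * m / r ^ (n - 1).

Definition kdf (n : nat) (l : R) (K : Z) (m r : R) : R :=
  2 * r / l ^ 2 + 2 * (INR n - 1) * m / r ^ n.

Definition mu_min (n : nat) (l : R) : R :=
  - (1 / (INR n + 1)) * Rpower ((INR n + 1) / (l ^ 2 * (INR n - 1))) ((1 - INR n) / 2).

Definition mu_c (n : nat) (l : R) : R :=
  INR n / (INR n + 1) * (l * sqrt ((INR n - 1) / (INR n + 1))) ^ (n - 1).

Definition admissible (n : nat) (l : R) (K : Z) (m : R) : Prop :=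
  ((K = 0%Z \/ K = 1%Z) -> 0 < m) /\ (K = (-1)%Z -> mu_min n l < m).

Definition is_r0 (n : nat) (l : R) (K : Z) (m r0 : R) : Prop :=
  0 < r0 /\ kf n l K m r0 = 0 /\ (forall r, r0 < r -> kf n l K m r <> 0).

(* Component g_{rho rho} = f'(r0)^2 / f'(r(rho))^2 of the metric
   g_mu = rho^2 dphi^2 + g_{rho rho} drho^2 + r(rho)^2 h_K,
   where R0 m = r0(mu=m) and Rr m rho = r(rho) for mass m. *)
Definition g_rr (n : nat) (l : R) (K : Z) (R0 : R -> R) (Rr : R -> R -> R)
  (m rho : R) : R :=
  (kdf n l K m (R0 m)) ^ 2 / (kdf n l K m (Rr m rho)) ^ 2.

Definition g_N (Rr : R -> R -> R) (m rho : R) : R := (Rr m rho) ^ 2.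

(* Pointwise squared g-norm |k|^2_g of k = kr drho^2 + kN h_K (k_{phi phi} = 0,
   since g_{phi phi} = rho^2 is mu-independent), times the Riemannian volume
   density rho * sqrt(g_rr) * r^n (w.r.t. drho dphi dvol_{h_K}). *)
Definition L2_density (n : nat) (l : R) (K : Z) (R0 : R -> R) (Rr : R -> R -> R)
  (m : R) (kr kN : R -> R) (rho : R) : R :=
  ((kr rho / g_rr n l K R0 Rr m rho) ^ 2
     + INR n * (kN rho / g_N Rr m rho) ^ 2)
  * (rho * sqrt (g_rr n l K R0 Rr m rho) * (Rr m rho) ^ n).

Definition finite_integral_0_inf (h : R -> R) : Prop :=
  (forall b, 0 <= b -> inhabited (Riemann_integrable h 0 b)) /\
  exists C, forall b (pr : Riemann_integrable h 0 b), 0 <= b -> RiemannInt pr <= C.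

(* dg_mu/dmu (with radial components kr, kN) lies in L^2(M, g_mu).
   The integrand is independent of (phi, x), so the integral over
   M = R^2 x N equals 2*pi*Vol(N, h_K) times the radial integral. *)
Definition variation_in_L2 (n : nat) (l : R) (K : Z) (R0 : R -> R) (Rr : R -> R -> R)
  (m : R) (kr kN : R -> R) : Prop :=
  finite_integral_0_inf (L2_density n l K R0 Rr m kr kN).

(* Write F = f'(r0) and let r(rho) solve f(r) = rho^2 F^2 / 4.  Differentiating
   f(r0) = 0 and this relation in mu (implicit function theorem) gives
     (dr/dmu) f'(r) = 2 / r^(n-1) + 2 f(r) (dF/dmu) / F.
   If dF/dmu <> 0, the N-component k_N / g_N = 2 (dr/dmu) / r tends to a nonzero
   constant while the volume factor grows like r^n ~ rho^n, so the variation is not in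
   L^2.  If dF/dmu = 0, every component decays like r^-(n+1) and the L^2 density is
   O(rho^-2).  Finally, 2 mu = r0^(n-1) (r0^2/l^2 + K) turns (dF/dmu) F r0^(n+1) into
   2 ((n+1) r0^2/l^2 - (n-1) K), which vanishes only for K = 1 and
   r0 = l sqrt((n-1)/(n+1)), i.e. mu = mu_c. *)

From Stdlib Require Import Reals Lra Lia ZArith.
From Coquelicot Require Import Coquelicot.
Open Scope R_scope.

(** * Real-analysis preliminaries *)

Lemma Rabs_div_le (a y y0 : R) : 0 < y0 <= y -> Rabs (a / y) <= Rabs a / y0.
Proof.
  intros Hy. unfold Rdiv. rewrite Rabs_mult, Rabs_inv, (Rabs_pos_eq y) by lra.
  apply Rmult_le_compat_l; [apply Rabs_pos|]. apply Rinv_le_contravar; lra.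
Qed.

Lemma Rdiv_jointly_continuous (c D0 : R) : D0 <> 0 ->
  forall eps, 0 < eps -> exists delta, 0 < delta /\ forall q d,
    Rabs (q - c) < delta -> Rabs (d - D0) < delta -> Rabs (q / d - c / D0) < eps.
Proof.
  intros HD0 eps Heps.
  assert (Hlim : filterlim (fun p : R * R => fst p * / snd p)
                   (filter_prod (locally c) (locally D0)) (locally (c / D0))).
  { eapply (filterlim_comp_2 (G := locally c) (H := locally (/ D0)) fst (fun p => / snd p) Rmult).
    - apply filterlim_fst.
    - eapply filterlim_comp; [apply filterlim_snd|].
      apply (filterlim_Rbar_inv D0). intros E; apply HD0. now injection E.
    - apply (filterlim_Rbar_mult c (/ D0) (c / D0)). reflexivity. }
  destruct (Hlim _ (locally_ball (c / D0) (mkposreal eps Heps))) as [Q P [d1 Hd1] [d2 Hd2] HQP].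
  exists (Rmin d1 d2). split; [apply Rmin_glb_lt; apply cond_pos|].
  intros q d Hq Hd. apply (HQP q d).
  - apply Hd1. eapply Rlt_le_trans; [exact Hq| apply Rmin_l].
  - apply Hd2. eapply Rlt_le_trans; [exact Hd| apply Rmin_r].
Qed.

(* Carathéodory's form of differentiability, with slopes [s] depending on [m]. *)
Lemma derivable_pt_lim_of_secant_factor (r G : R -> R) (m0 c D0 : R) :
  D0 <> 0 -> derivable_pt_lim G m0 c ->
  (forall eps, 0 < eps -> locally m0 (fun m =>
     exists s, Rabs (s - D0) < eps /\ (r m - r m0) * s = G m0 - G m)) ->
  derivable_pt_lim r m0 (- c / D0).
Proof.
  intros HD0 HG Hfac eps Heps.
  assert (HA : 0 < Rabs D0) by now apply Rabs_pos_lt.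
  destruct (Rdiv_jointly_continuous c D0 HD0 eps Heps) as [d [Hd Hdiv]].
  destruct (HG d Hd) as [d1 Hd1].
  destruct (Hfac (Rmin d (Rabs D0)) ltac:(now apply Rmin_glb_lt)) as [d2 Hd2].
  exists (mkposreal _ (Rmin_pos _ _ (cond_pos d1) (cond_pos d2))); simpl.
  intros h Hh0 Hh.
  destruct (Hd2 (m0 + h)) as [s [Hs Hrs]].
  { change (Rabs (m0 + h - m0) < d2). replace (m0 + h - m0) with h by ring.
    eapply Rlt_le_trans; [exact Hh| apply Rmin_r]. }
  pose proof (Rmin_l d (Rabs D0)) as Hmin1. pose proof (Rmin_r d (Rabs D0)) as Hmin2.
  assert (Hs0 : s <> 0).
  { intros ->. rewrite Rminus_0_l, Rabs_Ropp in Hs. lra. }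
  assert (Hr : r (m0 + h) - r m0 = (G m0 - G (m0 + h)) / s)
    by (rewrite <- Hrs; field; exact Hs0).
  replace ((r (m0 + h) - r m0) / h) with (- ((G (m0 + h) - G m0) / h / s))
    by (rewrite Hr; field; auto).
  replace (- c / D0) with (- (c / D0)) by (field; exact HD0).
  set (q := (G (m0 + h) - G m0) / h).
  replace (- (q / s) - - (c / D0)) with (- (q / s - c / D0)) by ring.
  rewrite Rabs_Ropp.
  apply Hdiv; [apply Hd1; auto; eapply Rlt_le_trans; [exact Hh| apply Rmin_l] | lra].
Qed.

Lemma implicit_function_derivative (H D : R -> R -> R) (r : R -> R) (m0 c : R) :
  locally m0 (fun m => H m (r m) = 0) ->
  continuity_pt r m0 ->
  derivable_pt_lim (fun m => H m (r m0)) m0 c ->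
  (forall eps, 0 < eps -> exists delta, 0 < delta /\ forall m x,
     Rabs (m - m0) < delta -> Rabs (x - r m0) < delta ->
     derivable_pt_lim (H m) x (D m x) /\ Rabs (D m x - D m0 (r m0)) < eps) ->
  D m0 (r m0) <> 0 ->
  derivable_pt_lim r m0 (- c / D m0 (r m0)).
Proof.
  intros Hroot Hr Hc HD HD0.
  apply (derivable_pt_lim_of_secant_factor r (fun m => H m (r m0))); [exact HD0| exact Hc|].
  intros eps Heps. destruct (HD eps Heps) as [d [Hd HDd]].
  assert (Hrd := proj1 (continuity_pt_locally r m0) Hr (mkposreal d Hd)).
  assert (Hm := locally_ball m0 (mkposreal d Hd)).
  assert (Hroot0 := locally_singleton _ _ Hroot).
  eapply filter_imp; [| exact (filter_and _ _ Hroot (filter_and _ _ Hrd Hm))].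
  intros m [Hrm [Hrmd Hmd]]; simpl in Hrmd, Hmd.
  destruct (MVT_cor4 (H m) (D m) (r m0) (Rabs (r m - r m0))) with (b := r m)
    as [xi [Hxi Hxid]]; [| now right|].
  { intros x Hx. apply is_derive_Reals, HDd; [exact Hmd| lra]. }
  exists (D m xi). split; [apply HDd; [exact Hmd| lra]|].
  rewrite Hroot0, Rmult_comm. lra.
Qed.

Lemma implicit_root_continuous (H : R -> R -> R) (r : R -> R) (p0 delta : R) :
  0 < delta ->
  locally p0 (fun p => H p (r p) = 0 /\ forall x, r p < x -> 0 < H p x) ->
  (forall x y, r p0 <= x <= y -> H p0 x <= H p0 y) ->
  (forall eps, 0 < eps -> locally p0 (fun p =>
     forall x, r p0 - delta < x -> Rabs (H p x - H p0 x) < eps)) ->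
  (forall eps, 0 < eps -> exists x, r p0 - eps < x < r p0 /\ H p0 x < 0) ->
  continuity_pt r p0.
Proof.
  intros Hdelta Hroot Hmono Hunif Hneg.
  apply continuity_pt_locally. intros [eps Heps]; simpl.
  destruct (locally_singleton _ _ Hroot) as [_ Hpos0].
  assert (Hc : 0 < H p0 (r p0 + eps)) by (apply Hpos0; lra).
  destruct (Hneg (Rmin eps delta) (Rmin_pos _ _ Heps Hdelta)) as [x1 [Hx1 Hx1neg]].
  pose proof (Rmin_l eps delta). pose proof (Rmin_r eps delta).
  eapply filter_imp; [| exact (filter_and _ _ Hroot
    (filter_and _ _ (Hunif _ Hc) (Hunif (- H p0 x1) ltac:(lra))))].
  intros p [[Hp Hposp] [Hup Hlow]].
  apply Rabs_def1.
  - destruct (Rlt_or_le (r p) (r p0 + eps)) as [Hlt|Hge]; [lra| exfalso].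
    assert (Hm := Hmono (r p0 + eps) (r p) ltac:(lra)).
    specialize (Hup (r p) ltac:(lra)). rewrite Hp in Hup.
    apply Rabs_def2 in Hup. lra.
  - specialize (Hlow x1 ltac:(lra)). apply Rabs_def2 in Hlow.
    destruct (Rlt_or_le x1 (r p)) as [Hlt|[Hgt|Heq]]; [lra| |].
    + specialize (Hposp x1 Hgt). lra.
    + rewrite <- Heq in Hlow. lra.
Qed.

Lemma simple_root_sign_change (g : R -> R) (x0 d : R) :
  g x0 = 0 -> derivable_pt_lim g x0 d -> 0 < d ->
  forall eps, 0 < eps -> exists h, 0 < h < eps /\ g (x0 - h) < 0 < g (x0 + h).
Proof.
  intros Hg0 Hg Hd eps Heps.
  destruct (Hg (d / 2) ltac:(lra)) as [[delta Hdelta] Hdq]; simpl in Hdq.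
  set (h := Rmin eps delta / 2).
  assert (Hh : 0 < h < Rmin eps delta) by (unfold h; pose proof (Rmin_pos _ _ Heps Hdelta); lra).
  pose proof (Rmin_l eps delta). pose proof (Rmin_r eps delta).
  exists h. split; [lra|]. rewrite Hg0 in Hdq.
  assert (Hl := Hdq (- h) ltac:(lra) ltac:(rewrite Rabs_Ropp, Rabs_pos_eq; lra)).
  assert (Hr := Hdq h ltac:(lra) ltac:(rewrite Rabs_pos_eq; lra)).
  apply Rabs_def2 in Hl, Hr. rewrite Rminus_0_r in Hl, Hr.
  replace (x0 + - h) with (x0 - h) in Hl by ring.
  split.
  - assert (0 < g (x0 - h) / - h) by lra.
    replace (g (x0 - h)) with (- (g (x0 - h) / - h * h)) by (field; lra). nra.
  - assert (0 < g (x0 + h) / h) by lra.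
    replace (g (x0 + h)) with (g (x0 + h) / h * h) by (field; lra). nra.
Qed.

Lemma finite_integral_0_inf_ext (h1 h2 : R -> R) :
  (forall x, 0 <= x -> h1 x = h2 x) -> finite_integral_0_inf h1 -> finite_integral_0_inf h2.
Proof.
  intros E [Hint [C HC]]. split.
  - intros b Hb. destruct (Hint b Hb) as [pr]. constructor.
    apply (Riemann_integrable_ext h1); [| exact pr].
    intros x Hx. rewrite Rmin_left in Hx by lra. apply E. lra.
  - exists C. intros b pr Hb. destruct (Hint b Hb) as [pr1].
    rewrite <- (RiemannInt_P18 pr1 pr Hb); [now apply HC|].
    intros x Hx. apply E. lra.
Qed.

Lemma RiemannInt_inverse_square_le (C b : R)
  (pr : Riemann_integrable (fun t => C / (1 + t) ^ 2) 0 b) :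
  0 <= C -> 0 <= b -> RiemannInt pr <= C.
Proof.
  intros HC Hb. rewrite <- RInt_Reals.
  assert (HI : is_RInt (fun t => C / (1 + t) ^ 2) 0 b (- C / (1 + b) - - C / (1 + 0))).
  { apply (is_RInt_derive (fun t => - C / (1 + t))).
    - intros x Hx. rewrite Rmin_left, Rmax_right in Hx by lra.
      auto_derive; [lra| field; lra].
    - intros x Hx. rewrite Rmin_left, Rmax_right in Hx by lra.
      apply (ex_derive_continuous (V := R_NormedModule)). auto_derive. nra. }
  rewrite (is_RInt_unique _ _ _ _ HI).
  assert (0 <= C / (1 + b)) by (apply Rdiv_le_0_compat; lra).
  replace (- C / (1 + b) - - C / (1 + 0)) with (C - C / (1 + b)) by (field; lra).
  lra.
Qed.

Lemma finite_integral_of_inverse_square_bound (h : R -> R) (C : R) :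
  0 <= C -> (forall x, continuity_pt h x) ->
  (forall x, 0 <= x -> h x <= C / (1 + x) ^ 2) -> finite_integral_0_inf h.
Proof.
  intros HC Hcont Hle. split.
  - intros b Hb. constructor. now apply continuity_implies_RiemannInt.
  - exists C. intros b pr Hb.
    assert (prC : Riemann_integrable (fun t => C / (1 + t) ^ 2) 0 b).
    { apply continuity_implies_RiemannInt; [exact Hb|]. intros x Hx.
      apply continuity_pt_filterlim.
      apply (ex_derive_continuous (V := R_NormedModule) (fun t => C / (1 + t) ^ 2)).
      auto_derive. nra. }
    apply (Rle_trans _ (RiemannInt prC)); [| now apply RiemannInt_inverse_square_le].
    apply RiemannInt_P19; [exact Hb|]. intros x Hx. exact (Hle x ltac:(lra)).
Qed.

Lemma not_finite_integral_of_eventual_lower_bound (h : R -> R) (c : R) :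
  0 < c -> (forall x, 0 <= x -> 0 <= h x) ->
  Rbar_locally p_infty (fun x => c <= h x) -> ~ finite_integral_0_inf h.
Proof.
  intros Hc Hnonneg [M HM] [Hint [C HC]].
  set (a := Rmax 0 M). set (b := a + (Rabs C + 1) / c).
  assert (Ha : 0 <= a /\ M <= a) by (split; [apply Rmax_l| apply Rmax_r]).
  assert (Hab : c * (b - a) = Rabs C + 1) by (unfold b; field; lra).
  assert (Hb : 0 <= a <= b) by (unfold b; pose proof (Rabs_pos C);
    assert (0 < (Rabs C + 1) / c) by (apply Rdiv_lt_0_compat; lra); lra).
  destruct (Hint b ltac:(lra)) as [pr].
  pose proof (HC b pr ltac:(lra)) as Hle.
  pose proof (RiemannInt_P22 pr Hb) as pr1. pose proof (RiemannInt_P23 pr Hb) as pr2.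
  rewrite <- (RiemannInt_P26 pr1 pr2 pr) in Hle.
  assert (I1 : 0 <= RiemannInt pr1).
  { assert (p0 : Riemann_integrable (fun _ => 0) 0 a) by apply RiemannInt_P14.
    apply (Rle_trans _ (RiemannInt p0)); [rewrite RiemannInt_const; lra|].
    apply RiemannInt_P19; [lra|]. intros x Hx. apply Hnonneg. lra. }
  assert (I2 : c * (b - a) <= RiemannInt pr2).
  { assert (pc : Riemann_integrable (fun _ => c) a b) by apply RiemannInt_P14.
    rewrite <- (RiemannInt_const c a b pc).
    apply RiemannInt_P19; [lra|]. intros x Hx. apply HM. lra. }
  pose proof (Rle_abs C). lra.
Qed.


(** * The Kottler potential and its roots *)

Section Kottler.
Variables (n : nat) (l : R) (K : Z).
Hypothesis Hn : (2 <= n)%nat.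
Hypothesis Hl : 0 < l.
Hypothesis HK : K = (-1)%Z \/ K = 0%Z \/ K = 1%Z.

Local Notation f := (kf n l K).
Local Notation df := (kdf n l K).

Definition kddf (m x : R) : R := 2 / l ^ 2 - 2 * INR n * (INR n - 1) * m / x ^ S n.

Lemma INR_n_ge2 : 2 <= INR n.
Proof. replace 2 with (INR 2) by (simpl; ring). apply le_INR; lia. Qed.

Lemma IZR_K_bounds : -1 <= IZR K <= 1.
Proof. destruct HK as [-> | [-> | ->]]; simpl; lra. Qed.

Lemma pow_pred_mul (x : R) : x ^ n = x * x ^ (n - 1).
Proof. destruct n as [|k]; [lia|]. simpl. now rewrite Nat.sub_0_r. Qed.

Lemma kf_derive m x : 0 < x -> derivable_pt_lim (f m) x (df m x).
Proof.
  intros Hx. apply is_derive_Reals. unfold kf, kdf.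
  destruct n as [|[|k]]; [lia| lia|].
  replace (S (S k) - 1)%nat with (S k) by lia.
  assert (x ^ k <> 0) by (apply pow_nonzero; lra).
  auto_derive; [simpl; apply Rmult_integral_contrapositive; split; lra|].
  change (pred (S k)) with k. rewrite <- !tech_pow_Rmult.
  change (match k with 0%nat => 1 | S _ => INR k + 1 end) with (INR (S k)).
  rewrite !S_INR. field. repeat split; lra.
Qed.

Lemma kf_mass_derive m x : derivable_pt_lim (fun m => f m x) m (- 2 / x ^ (n - 1)).
Proof.
  apply is_derive_Reals. unfold kf.
  set (c := x ^ 2 / l ^ 2 + IZR K). set (P := x ^ (n - 1)).
  auto_derive; [exact I|]. unfold Rdiv. ring.
Qed.

(* [2 (n - 1) / x ^ n] is the mass derivative of [kdf] and [kddf] its x-derivative. *)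
Lemma kdf_along_derive (g : R -> R) m0 g' :
  0 < g m0 -> derivable_pt_lim g m0 g' ->
  derivable_pt_lim (fun m => df m (g m)) m0
    (2 * (INR n - 1) / g m0 ^ n + kddf m0 (g m0) * g').
Proof.
  intros Hg Hd. apply is_derive_Reals in Hd. apply is_derive_Reals. unfold kdf, kddf.
  auto_derive.
  - repeat split; try (exists g'; exact Hd). apply pow_nonzero. lra.
  - replace (Derive (fun x => g x) m0) with g' by (symmetry; now apply is_derive_unique).
    destruct n as [|k]; [lia|]. change (pred (S k)) with k.
    assert (g m0 ^ k <> 0) by (apply pow_nonzero; lra).
    rewrite <- !tech_pow_Rmult, S_INR. field. lra.
Qed.

Lemma kf_continuous m x : 0 < x -> continuity_pt (f m) x.
Proof. intros Hx. apply derivable_continuous_pt. exists (df m x). now apply kf_derive. Qed.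

Lemma kf_mass_shift m m' x : 0 < x -> f m x = f m' x - 2 * (m - m') / x ^ (n - 1).
Proof. intros Hx. unfold kf. field. split; [apply pow_nonzero|]; lra. Qed.

Lemma kf_eventually_ge m : Rbar_locally p_infty (fun x => x ^ 2 / (2 * l ^ 2) <= f m x).
Proof.
  exists (Rmax 1 (2 * l * (1 + Rabs m))). intros x Hx.
  pose proof (Rmax_l 1 (2 * l * (1 + Rabs m))). pose proof (Rmax_r 1 (2 * l * (1 + Rabs m))).
  pose proof (Rabs_pos m). pose proof IZR_K_bounds.
  assert (Hmx : Rabs (2 * m / x ^ (n - 1)) <= 2 * Rabs m).
  { eapply Rle_trans; [apply (Rabs_div_le _ _ 1); split; [lra| apply pow_R1_Rle; lra]|].
    rewrite Rdiv_1_r, Rabs_mult, (Rabs_pos_eq 2); lra. }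
  assert (Hxl : 2 * (1 + Rabs m) <= x / l) by (apply (Rle_div_r _ _ l); lra).
  assert (Hsq : x ^ 2 / (2 * l ^ 2) = (x / l) ^ 2 / 2) by (field; lra).
  assert (x ^ 2 / l ^ 2 = (x / l) ^ 2) by (field; lra).
  pose proof (Rle_abs (2 * m / x ^ (n - 1))).
  unfold kf. nra.
Qed.

Lemma kdf_eventually_le m : Rbar_locally p_infty (fun x => df m x <= 3 * x / l ^ 2).
Proof.
  assert (Hl2 : 0 < l ^ 2) by (apply pow_lt; lra). pose proof INR_n_ge2.
  exists (Rmax 1 (2 * (INR n - 1) * Rabs m * l ^ 2)). intros x Hx.
  pose proof (Rmax_l 1 (2 * (INR n - 1) * Rabs m * l ^ 2)).
  pose proof (Rmax_r 1 (2 * (INR n - 1) * Rabs m * l ^ 2)).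
  assert (Hm : Rabs (2 * (INR n - 1) * m / x ^ n) <= 2 * (INR n - 1) * Rabs m).
  { eapply Rle_trans; [apply (Rabs_div_le _ _ 1); split; [lra| apply pow_R1_Rle; lra]|].
    rewrite Rdiv_1_r, !Rabs_mult, (Rabs_pos_eq 2), (Rabs_pos_eq (INR n - 1)); lra. }
  assert (2 * (INR n - 1) * Rabs m <= x / l ^ 2) by (apply (Rle_div_r _ _ (l ^ 2)); lra).
  pose proof (Rle_abs (2 * (INR n - 1) * m / x ^ n)).
  unfold kdf. replace (3 * x / l ^ 2) with (2 * x / l ^ 2 + x / l ^ 2) by (field; lra). lra.
Qed.

Lemma kf_pos_beyond_root m r0 x : is_r0 n l K m r0 -> r0 < x -> 0 < f m x.
Proof.
  intros [Hr0 [_ Hnz]] Hx.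
  destruct (Rtotal_order 0 (f m x)) as [Hpos|[Hz|Hneg]]; [exact Hpos| now destruct (Hnz x Hx)|].
  exfalso. destruct (kf_eventually_ge m) as [M HM].
  pose proof (Rmax_l (x + 1) (M + 1)). pose proof (Rmax_r (x + 1) (M + 1)).
  set (X := Rmax (x + 1) (M + 1)) in *.
  assert (HX : 0 < f m X).
  { eapply Rlt_le_trans; [| apply HM; lra].
    apply Rdiv_lt_0_compat; [apply pow_lt|]; nra. }
  destruct (Ranalysis5.IVT_interv (f m) x X) as [z [Hz Hfz]]; [| lra| lra| lra|].
  - intros a Ha. apply kf_continuous. lra.
  - apply (Hnz z); [lra| exact Hfz].
Qed.

Lemma kf_root_mass m r : 0 < r -> f m r = 0 -> 2 * m = r ^ (n - 1) * (r ^ 2 / l ^ 2 + IZR K).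
Proof.
  intros Hr Hf. unfold kf in Hf. assert (r ^ (n - 1) <> 0) by (apply pow_nonzero; lra).
  replace (2 * m) with (2 * m / r ^ (n - 1) * r ^ (n - 1)) by (field; auto).
  replace (2 * m / r ^ (n - 1)) with (r ^ 2 / l ^ 2 + IZR K) by lra. ring.
Qed.

Lemma kdf_at_root m r : 0 < r -> f m r = 0 ->
  df m r * r = (INR n + 1) * r ^ 2 / l ^ 2 + (INR n - 1) * IZR K.
Proof.
  intros Hr Hf. pose proof (kf_root_mass m r Hr Hf) as Hm.
  assert (r ^ (n - 1) <> 0) by (apply pow_nonzero; lra).
  assert (Hm' : m = r ^ (n - 1) * (r ^ 2 / l ^ 2 + IZR K) / 2) by lra.
  unfold kdf. rewrite pow_pred_mul, Hm'. field. lra.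
Qed.

Lemma mu_min_at_degenerate_root r : 0 < r -> (INR n + 1) * r ^ 2 = (INR n - 1) * l ^ 2 ->
  mu_min n l = - r ^ (n - 1) / (INR n + 1).
Proof.
  intros Hr Hrel. pose proof INR_n_ge2.
  assert (Hb : (INR n + 1) / (l ^ 2 * (INR n - 1)) = / r ^ 2).
  { assert (0 < l ^ 2) by (apply pow_lt; lra). assert (0 < r ^ 2) by (apply pow_lt; lra).
    field_simplify_eq; [nra| repeat split; lra]. }
  unfold mu_min. rewrite Hb. unfold Rpower.
  rewrite ln_Rinv, ln_pow by (try apply pow_lt; lra).
  replace ((1 - INR n) / 2 * - (INR 2 * ln r)) with (INR (n - 1) * ln r)
    by (rewrite minus_INR by lia; simpl; field).
  fold (Rpower r (INR (n - 1))). rewrite Rpower_pow by lra. field. lra.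
Qed.

Lemma kdf_root_nonneg m r0 : is_r0 n l K m r0 -> 0 <= df m r0.
Proof.
  intros Hr. destruct (Rle_or_lt 0 (df m r0)) as [Hnn|Hneg]; [exact Hnn| exfalso].
  destruct Hr as [Hr0 [Hf0 Hnz]].
  destruct (simple_root_sign_change (fun x => - f m x) r0 (- df m r0)) with (eps := 1)
    as [h [Hh [_ Hfneg]]]; try lra.
  - exact (derivable_pt_lim_opp _ _ _ (kf_derive m r0 Hr0)).
  - pose proof (kf_pos_beyond_root m r0 (r0 + h) (conj Hr0 (conj Hf0 Hnz)) ltac:(lra)). lra.
Qed.

(* In the critical case K = -1, f'(r0) = 0 forces mu = mu_min, which admissibility excludes. *)
Lemma kdf_root_pos m r0 : admissible n l K m -> is_r0 n l K m r0 -> 0 < df m r0.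
Proof.
  intros [Hadm0 Hadm1] Hr. destruct (kdf_root_nonneg m r0 Hr) as [Hpos|Hzero]; [exact Hpos| exfalso].
  destruct Hr as [Hr0 [Hf0 _]]. pose proof INR_n_ge2.
  pose proof (kdf_at_root m r0 Hr0 Hf0) as Hd. rewrite <- Hzero, Rmult_0_l in Hd.
  pose proof (kf_root_mass m r0 Hr0 Hf0) as Hm.
  assert (Hl2 : 0 < l ^ 2) by (apply pow_lt; lra).
  assert (Hs : 0 < r0 ^ 2 / l ^ 2) by (apply Rdiv_lt_0_compat; [apply pow_lt|]; lra).
  destruct HK as [HK1|[HK1|HK1]]; rewrite HK1 in Hd, Hm;
    [change (IZR (-1)) with (-1) in Hd, Hm| change (IZR 0) with 0 in Hd; nra|
     change (IZR 1) with 1 in Hd; nra].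
  assert (Hd' : (INR n + 1) * (r0 ^ 2 / l ^ 2) = INR n - 1) by (unfold Rdiv in *; lra).
  assert (Hs' : r0 ^ 2 / l ^ 2 = (INR n - 1) / (INR n + 1))
    by (apply (Rmult_eq_reg_l (INR n + 1)); [rewrite Hd'; field|]; lra).
  assert (Hrel : (INR n + 1) * r0 ^ 2 = (INR n - 1) * l ^ 2).
  { replace (r0 ^ 2) with (r0 ^ 2 / l ^ 2 * l ^ 2) by (field; lra). rewrite Hs'. field. lra. }
  rewrite Hs' in Hm. specialize (Hadm1 HK1).
  rewrite (mu_min_at_degenerate_root r0 Hr0 Hrel) in Hadm1.
  assert (m = - r0 ^ (n - 1) / (INR n + 1)) by (apply (Rmult_eq_reg_l 2); [rewrite Hm; field|]; lra).
  lra.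
Qed.

Lemma kdf_pos_beyond_root m r0 x :
  admissible n l K m -> is_r0 n l K m r0 -> r0 <= x -> 0 < df m x.
Proof.
  intros Ha Hr Hx. pose proof (kdf_root_pos m r0 Ha Hr) as Hp.
  destruct Hr as [Hr0 _]. pose proof INR_n_ge2.
  assert (Hl2 : 0 < l ^ 2) by (apply pow_lt; lra).
  assert (0 < r0 ^ n) by (apply pow_lt; lra).
  assert (r0 ^ n <= x ^ n) by (apply pow_incr; lra).
  assert (2 * r0 / l ^ 2 <= 2 * x / l ^ 2) by (apply Rmult_le_compat_r; [left; apply Rinv_0_lt_compat|]; lra).
  unfold kdf in *. destruct (Rle_or_lt 0 m) as [Hm|Hm].
  - assert (0 <= 2 * (INR n - 1) * m / x ^ n) by (apply Rdiv_le_0_compat; nra).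
    assert (0 < 2 * x / l ^ 2) by (apply Rdiv_lt_0_compat; lra). lra.
  - assert (2 * (INR n - 1) * m / r0 ^ n <= 2 * (INR n - 1) * m / x ^ n).
    { unfold Rdiv. assert (2 * (INR n - 1) * m < 0) by nra.
      assert (/ x ^ n <= / r0 ^ n) by (apply Rinv_le_contravar; lra). nra. }
    lra.
Qed.

Lemma kf_increasing_beyond_root m r0 x y :
  admissible n l K m -> is_r0 n l K m r0 -> r0 <= x -> x < y -> f m x < f m y.
Proof.
  intros Ha Hr Hx Hxy. pose proof Hr as [Hr0 _].
  destruct (MVT_cor2 (f m) (df m) x y Hxy) as [c [Hc1 Hc2]].
  - intros c Hc. apply kf_derive. lra.
  - pose proof (kdf_pos_beyond_root m r0 c Ha Hr ltac:(lra)). nra.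
Qed.

Lemma admissible_locally m0 : admissible n l K m0 -> locally m0 (admissible n l K).
Proof.
  intros [H01 H1]. destruct HK as [E|[E|E]]; subst K.
  - apply (filter_imp (fun m => mu_min n l < m)); [| exact (open_gt _ m0 (H1 eq_refl))].
    intros m Hm. split; [intros [E|E]; discriminate| now intros _].
  - apply (filter_imp (fun m => 0 < m)); [| exact (open_gt _ m0 (H01 (or_introl eq_refl)))].
    intros m Hm. split; [now intros _| intros E; discriminate].
  - apply (filter_imp (fun m => 0 < m)); [| exact (open_gt _ m0 (H01 (or_intror eq_refl)))].
    intros m Hm. split; [now intros _| intros E; discriminate].
Qed.

Lemma kdf_jointly_continuous m0 x0 : 0 < x0 -> forall eps, 0 < eps ->
  exists delta, 0 < delta /\ forall m x, Rabs (m - m0) < delta -> Rabs (x - x0) < delta ->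
    0 < x /\ Rabs (df m x - df m0 x0) < eps.
Proof.
  intros Hx0 eps Heps. pose proof INR_n_ge2.
  assert (Hcont : continuity_pt (df m0) x0).
  { apply continuity_pt_filterlim, (ex_derive_continuous (V := R_NormedModule) (df m0)).
    unfold kdf. auto_derive. apply pow_nonzero. lra. }
  destruct (Hcont (eps / 2)) as [d1 [Hd1 Hc]]; [lra|].
  assert (Hq : 0 < (x0 / 2) ^ n) by (apply pow_lt; lra).
  set (d2 := eps * (x0 / 2) ^ n / (4 * INR n)).
  assert (Hd2 : 0 < d2) by (unfold d2; apply Rdiv_lt_0_compat; [apply Rmult_lt_0_compat|]; lra).
  exists (Rmin (Rmin d1 d2) (x0 / 2)). split; [repeat apply Rmin_glb_lt; lra|].
  intros m x Hm Hx.
  pose proof (Rmin_l (Rmin d1 d2) (x0 / 2)). pose proof (Rmin_r (Rmin d1 d2) (x0 / 2)).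
  pose proof (Rmin_l d1 d2). pose proof (Rmin_r d1 d2).
  assert (Hxb : x0 / 2 < x) by (apply Rabs_def2 in Hx; lra). split; [lra|].
  assert (Hxn : (x0 / 2) ^ n <= x ^ n) by (apply pow_incr; lra).
  assert (Hshift : df m x - df m0 x = 2 * (INR n - 1) * (m - m0) / x ^ n)
    by (unfold kdf; field; split; [apply pow_nonzero|]; lra).
  assert (Hmass : Rabs (df m x - df m0 x) < eps / 2).
  { rewrite Hshift. eapply Rle_lt_trans; [apply Rabs_div_le; split; [exact Hq| exact Hxn]|].
    apply Rlt_div_l; [exact Hq|].
    rewrite Rabs_mult, (Rabs_pos_eq (2 * (INR n - 1))) by lra.
    assert (Hd2' : d2 * (4 * INR n) = eps * (x0 / 2) ^ n) by (unfold d2; field; lra).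
    assert (0 <= (INR n - 1) * Rabs (m - m0)) by (apply Rmult_le_pos; [lra| apply Rabs_pos]).
    assert (Rabs (m - m0) < d2) by lra. nra. }
  assert (Hpos : Rabs (df m0 x - df m0 x0) < eps / 2).
  { destruct (Req_dec x x0) as [->|Hne]; [rewrite Rminus_diag, Rabs_R0; lra|].
    apply Hc. split; [split; [exact I| auto]| simpl; unfold R_dist; lra]. }
  replace (df m x - df m0 x0) with ((df m x - df m0 x) + (df m0 x - df m0 x0)) by ring.
  eapply Rle_lt_trans; [apply Rabs_triang|]. lra.
Qed.

Lemma kf_sub_derive m c x : 0 < x -> derivable_pt_lim (fun x => f m x - c) x (df m x).
Proof.
  intros Hx. replace (df m x) with (df m x - 0) by ring.
  apply (derivable_pt_lim_minus (f m) (fun _ => c)); [now apply kf_derive| apply derivable_pt_lim_const].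
Qed.

(** * Mass derivatives of the roots *)

Variable R0 : R -> R.
Hypothesis HR0 : forall m, admissible n l K m -> is_r0 n l K m (R0 m).
Variable mu : R.
Hypothesis Hmu : admissible n l K mu.

Definition r0 := R0 mu.
Definition F0 := df mu r0.

Lemma r0_pos : 0 < r0.
Proof. exact (proj1 (HR0 mu Hmu)). Qed.

Lemma F0_pos : 0 < F0.
Proof. exact (kdf_root_pos mu r0 Hmu (HR0 mu Hmu)). Qed.

Lemma kf_increasing_beyond_r0 x y : r0 <= x <= y -> f mu x <= f mu y.
Proof.
  intros [Hx [Hlt| ->]]; [| now right].
  left. exact (kf_increasing_beyond_root mu r0 x y Hmu (HR0 mu Hmu) Hx Hlt).
Qed.

(* The two roots of the paper, R0 m and Rr m rho, both solve [f m (r m) = G m] for a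
   smooth level [G]; continuity and differentiability in the mass are proved once. *)
Lemma kottler_root_continuous (G r : R -> R) :
  continuity_pt G mu -> r0 <= r mu ->
  locally mu (fun m => f m (r m) = G m /\ forall x, r m < x -> G m < f m x) ->
  continuity_pt r mu.
Proof.
  intros HG Hr Hroot. pose proof r0_pos as Hr0.
  assert (Hq : 0 < (r mu / 2) ^ (n - 1)) by (apply pow_lt; lra).
  apply (implicit_root_continuous (fun m x => f m x - G m) r mu (r mu / 2)); [lra| | | |].
  - eapply filter_imp; [| exact Hroot]. intros m [E Hpos].
    split; [lra| intros x Hx; specialize (Hpos x Hx); lra].
  - intros x y Hxy. pose proof (kf_increasing_beyond_r0 x y ltac:(lra)). lra.
  - intros eps Heps.
    assert (HGe := proj1 (continuity_pt_locally G mu) HG (mkposreal (eps / 2) ltac:(lra))).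
    assert (Hball := locally_ball mu (mkposreal (eps * (r mu / 2) ^ (n - 1) / 4)
                       ltac:(apply Rdiv_lt_0_compat; [apply Rmult_lt_0_compat|]; lra))).
    eapply filter_imp; [| exact (filter_and _ _ HGe Hball)]. simpl.
    intros m [HGm Hm] x Hx. change (Rabs (m - mu) < eps * (r mu / 2) ^ (n - 1) / 4) in Hm.
    rewrite (kf_mass_shift m mu x) by lra.
    replace (f mu x - 2 * (m - mu) / x ^ (n - 1) - G m - (f mu x - G mu))
      with (- (2 * (m - mu) / x ^ (n - 1)) - (G m - G mu)) by ring.
    eapply Rle_lt_trans; [apply Rabs_triang|]. rewrite Rabs_Ropp, Rabs_Ropp.
    assert (Hpow : (r mu / 2) ^ (n - 1) <= x ^ (n - 1)) by (apply pow_incr; lra).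
    assert (Hd := Rabs_div_le (2 * (m - mu)) _ _ (conj Hq Hpow)).
    rewrite Rabs_mult, (Rabs_pos_eq 2) in Hd by lra.
    assert (2 * Rabs (m - mu) / (r mu / 2) ^ (n - 1) < eps / 2)
      by (apply Rlt_div_l; [exact Hq| lra]).
    lra.
  - intros eps Heps.
    destruct (simple_root_sign_change (fun x => f mu x - G mu) (r mu) (df mu (r mu)))
      with (eps := eps) as [h [Hh [Hneg _]]].
    + destruct (locally_singleton _ _ Hroot) as [E _]. lra.
    + apply kf_sub_derive. lra.
    + exact (kdf_pos_beyond_root mu r0 (r mu) Hmu (HR0 mu Hmu) Hr).
    + exact Heps.
    + exists (r mu - h). split; [lra| exact Hneg].
Qed.

Lemma kottler_root_derive (G r : R -> R) (g' : R) :
  derivable_pt_lim G mu g' -> r0 <= r mu -> continuity_pt r mu ->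
  locally mu (fun m => f m (r m) = G m) ->
  derivable_pt_lim r mu ((2 / r mu ^ (n - 1) + g') / df mu (r mu)).
Proof.
  intros HG Hr Hcont Hroot. pose proof r0_pos as Hr0.
  assert (HD := kdf_pos_beyond_root mu r0 (r mu) Hmu (HR0 mu Hmu) Hr).
  replace ((2 / r mu ^ (n - 1) + g') / df mu (r mu))
    with (- (- 2 / r mu ^ (n - 1) - g') / df mu (r mu)) by (field; repeat split; try apply pow_nonzero; lra).
  apply (implicit_function_derivative (fun m x => f m x - G m) df r mu); [| exact Hcont| | | lra].
  - eapply filter_imp; [| exact Hroot]. intros m E. lra.
  - apply (derivable_pt_lim_minus (fun m => f m (r mu)) G); [apply kf_mass_derive| exact HG].
  - intros eps Heps. destruct (kdf_jointly_continuous mu (r mu) ltac:(lra) eps Heps) as [d [Hd Hj]].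
    exists d. split; [exact Hd|]. intros m x Hm Hx. destruct (Hj m x Hm Hx) as [Hx0 Hdx].
    split; [now apply kf_sub_derive| exact Hdx].
Qed.

Lemma R0_root_locally :
  locally mu (fun m => f m (R0 m) = 0 /\ forall x, R0 m < x -> 0 < f m x).
Proof.
  eapply filter_imp; [| exact (admissible_locally mu Hmu)]. intros m Hm.
  destruct (HR0 m Hm) as [Hpos [Hf0 Hnz]]. split; [exact Hf0|].
  intros x Hx. exact (kf_pos_beyond_root m (R0 m) x (HR0 m Hm) Hx).
Qed.

Lemma R0_continuous : continuity_pt R0 mu.
Proof.
  apply (kottler_root_continuous (fun _ => 0)); [apply continuity_pt_const; now intros ? ?| now right|].
  exact R0_root_locally.
Qed.

Definition dR0 := 2 / r0 ^ (n - 1) / F0.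

Lemma R0_derive : derivable_pt_lim R0 mu dR0.
Proof.
  pose proof r0_pos. pose proof F0_pos. unfold F0, r0 in *.
  replace dR0 with ((2 / R0 mu ^ (n - 1) + 0) / df mu (R0 mu))
    by (unfold dR0, F0, r0; field; repeat split; try apply pow_nonzero; lra).
  apply (kottler_root_derive (fun _ => 0)); [apply derivable_pt_lim_const| now right| exact R0_continuous|].
  eapply filter_imp; [| exact R0_root_locally]. now intros m [E _].
Qed.

Definition dF := 2 * (INR n - 1) / r0 ^ n + kddf mu r0 * dR0.

Lemma F_derive : derivable_pt_lim (fun m => df m (R0 m)) mu dF.
Proof. apply kdf_along_derive; [exact r0_pos| exact R0_derive]. Qed.

Lemma dF_identity :
  dF * F0 * r0 ^ S n = 2 * ((INR n + 1) * r0 ^ 2 / l ^ 2 - (INR n - 1) * IZR K).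
Proof.
  pose proof r0_pos as Hr0. pose proof F0_pos as HF0.
  destruct (HR0 mu Hmu) as [_ [Hf0 _]]. fold r0 in Hf0.
  pose proof (kf_root_mass mu r0 Hr0 Hf0) as Hm.
  pose proof (kdf_at_root mu r0 Hr0 Hf0) as Hd. fold F0 in Hd.
  assert (HP : r0 ^ (n - 1) <> 0) by (apply pow_nonzero; lra).
  assert (Hmu' : mu = r0 ^ (n - 1) * (r0 ^ 2 / l ^ 2 + IZR K) / 2) by lra.
  unfold dF, dR0, kddf. change (r0 ^ S n) with (r0 * r0 ^ n). rewrite !pow_pred_mul.
  transitivity (2 * (INR n - 1) * (F0 * r0)
    + (2 / l ^ 2 - 2 * INR n * (INR n - 1) * mu / (r0 * (r0 * r0 ^ (n - 1)))) * 2 * r0 ^ 2).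
  { field. repeat split; lra. }
  rewrite Hd, Hmu'. field. repeat split; lra.
Qed.

Definition critical_radius := l * sqrt ((INR n - 1) / (INR n + 1)).

Lemma critical_radius_pos : 0 < critical_radius.
Proof.
  pose proof INR_n_ge2. apply Rmult_lt_0_compat; [exact Hl|].
  apply sqrt_lt_R0, Rdiv_lt_0_compat; lra.
Qed.

Lemma critical_radius_sq : critical_radius ^ 2 = l ^ 2 * ((INR n - 1) / (INR n + 1)).
Proof.
  pose proof INR_n_ge2. unfold critical_radius.
  rewrite Rpow_mult_distr, <- (Rsqr_pow2 (sqrt _)), Rsqr_sqrt; [reflexivity|].
  apply Rdiv_le_0_compat; lra.
Qed.

Lemma mu_c_radius : mu_c n l = critical_radius ^ (n - 1) * (critical_radius ^ 2 / l ^ 2 + 1) / 2.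
Proof.
  pose proof INR_n_ge2. unfold mu_c. fold critical_radius. rewrite critical_radius_sq. field. lra.
Qed.

Lemma root_mass_increasing a b : 0 < a < b ->
  a ^ (n - 1) * (a ^ 2 / l ^ 2 + 1) < b ^ (n - 1) * (b ^ 2 / l ^ 2 + 1).
Proof.
  intros Hab. assert (0 < a ^ (n - 1)) by (apply pow_lt; lra).
  assert (a ^ (n - 1) <= b ^ (n - 1)) by (apply pow_incr; lra).
  assert (a ^ 2 / l ^ 2 < b ^ 2 / l ^ 2).
  { apply Rmult_lt_compat_r; [apply Rinv_0_lt_compat, pow_lt; lra| simpl; nra]. }
  assert (0 <= a ^ 2 / l ^ 2) by (apply Rdiv_le_0_compat; [apply pow2_ge_0| apply pow_lt; lra]).
  nra.
Qed.

Lemma mu_c_iff_critical_radius : K = 1%Z -> (mu = mu_c n l <-> r0 = critical_radius).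
Proof.
  intros HK1. pose proof r0_pos. pose proof critical_radius_pos.
  destruct (HR0 mu Hmu) as [_ [Hf0 _]]. fold r0 in Hf0.
  pose proof (kf_root_mass mu r0 r0_pos Hf0) as Hm. rewrite HK1 in Hm. change (IZR 1) with 1 in Hm.
  rewrite mu_c_radius. split.
  - intros E. rewrite E in Hm.
    destruct (Rtotal_order r0 critical_radius) as [Hlt|[Heq|Hgt]]; [| exact Heq|].
    + pose proof (root_mass_increasing r0 critical_radius ltac:(lra)). lra.
    + pose proof (root_mass_increasing critical_radius r0 ltac:(lra)). lra.
  - intros E. rewrite <- E. lra.
Qed.

Lemma dF_eq0_iff : dF = 0 <-> K = 1%Z /\ mu = mu_c n l.
Proof.
  pose proof dF_identity as Hid. pose proof r0_pos. pose proof F0_pos. pose proof INR_n_ge2.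
  assert (0 < r0 ^ S n) by (apply pow_lt; lra).
  assert (Hl2 : 0 < l ^ 2) by (apply pow_lt; lra).
  assert (Hs : 0 < r0 ^ 2 / l ^ 2) by (apply Rdiv_lt_0_compat; [apply pow_lt|]; lra).
  assert (Hs' : (INR n + 1) * r0 ^ 2 / l ^ 2 = (INR n + 1) * (r0 ^ 2 / l ^ 2)) by (field; lra).
  rewrite Hs' in Hid.
  split.
  - intros E. rewrite E, !Rmult_0_l in Hid.
    destruct HK as [HK1|[HK1|HK1]]; rewrite HK1 in Hid;
      [change (IZR (-1)) with (-1) in Hid; nra| change (IZR 0) with 0 in Hid; nra|].
    change (IZR 1) with 1 in Hid. split; [exact HK1|].
    apply (mu_c_iff_critical_radius HK1).
    apply Rsqr_inj; [lra| pose proof critical_radius_pos; lra|]. rewrite !Rsqr_pow2, critical_radius_sq.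
    replace (r0 ^ 2) with (r0 ^ 2 / l ^ 2 * l ^ 2) by (field; lra).
    replace (r0 ^ 2 / l ^ 2) with ((INR n - 1) / (INR n + 1))
      by (apply (Rmult_eq_reg_l (INR n + 1)); [field_simplify|]; lra).
    ring.
  - intros [HK1 Hmc]. apply (mu_c_iff_critical_radius HK1) in Hmc.
    rewrite HK1 in Hid. change (IZR 1) with 1 in Hid.
    assert (Hr : r0 ^ 2 / l ^ 2 = (INR n - 1) / (INR n + 1)) by (rewrite Hmc, critical_radius_sq; field; lra).
    rewrite Hr in Hid. replace (2 * ((INR n + 1) * ((INR n - 1) / (INR n + 1)) - (INR n - 1) * 1)) with 0 in Hid
      by (field; lra).
    assert (0 < F0 * r0 ^ S n) by (apply Rmult_lt_0_compat; lra).
    nra.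
Qed.

Variable Rr : R -> R -> R.
Hypothesis HRr : forall m, admissible n l K m -> forall rho, 0 <= rho ->
  R0 m <= Rr m rho /\ rho ^ 2 = 4 * f m (Rr m rho) / df m (R0 m) ^ 2.

Lemma Rr_level m rho : admissible n l K m -> 0 <= rho ->
  f m (Rr m rho) = rho ^ 2 * df m (R0 m) ^ 2 / 4.
Proof.
  intros Ha Hrho. destruct (HRr m Ha rho Hrho) as [_ E].
  pose proof (kdf_root_pos m (R0 m) Ha (HR0 m Ha)). rewrite E. field. lra.
Qed.

Definition rr rho := Rr mu rho.
Definition Dr rho := df mu (rr rho).

Lemma rr_ge_r0 rho : 0 <= rho -> r0 <= rr rho.
Proof. intros Hrho. exact (proj1 (HRr mu Hmu rho Hrho)). Qed.

Lemma rr_pos rho : 0 <= rho -> 0 < rr rho.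
Proof. intros Hrho. pose proof (rr_ge_r0 rho Hrho). pose proof r0_pos. lra. Qed.

Lemma Dr_pos rho : 0 <= rho -> 0 < Dr rho.
Proof. intros Hrho. exact (kdf_pos_beyond_root mu r0 (rr rho) Hmu (HR0 mu Hmu) (rr_ge_r0 rho Hrho)). Qed.

Lemma rr_level rho : 0 <= rho -> f mu (rr rho) = rho ^ 2 * F0 ^ 2 / 4.
Proof. intros Hrho. exact (Rr_level mu rho Hmu Hrho). Qed.

Lemma level_derive rho :
  derivable_pt_lim (fun m => rho ^ 2 * df m (R0 m) ^ 2 / 4) mu (rho ^ 2 * F0 * dF / 2).
Proof.
  apply is_derive_Reals. assert (HF := proj2 (is_derive_Reals _ _ _) F_derive).
  set (F := fun m => df m (R0 m)) in HF.
  change (is_derive (fun m => rho ^ 2 * F m ^ 2 / 4) mu (rho ^ 2 * F0 * dF / 2)).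
  assert (HF0 : F mu = F0) by reflexivity. clearbody F.
  auto_derive; [exists dF; exact HF|].
  replace (Derive (fun x => F x) mu) with dF by (symmetry; now apply is_derive_unique).
  rewrite HF0. field.
Qed.

Lemma Rr_root_locally rho : 0 <= rho ->
  locally mu (fun m => f m (Rr m rho) = rho ^ 2 * df m (R0 m) ^ 2 / 4 /\
    forall x, Rr m rho < x -> rho ^ 2 * df m (R0 m) ^ 2 / 4 < f m x).
Proof.
  intros Hrho. eapply filter_imp; [| exact (admissible_locally mu Hmu)]. intros m Hm.
  rewrite <- (Rr_level m rho Hm Hrho). split; [reflexivity|].
  intros x Hx. apply (kf_increasing_beyond_root m (R0 m)); [exact Hm| exact (HR0 m Hm)| | exact Hx].
  exact (proj1 (HRr m Hm rho Hrho)).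
Qed.

Lemma Rr_continuous rho : 0 <= rho -> continuity_pt (fun m => Rr m rho) mu.
Proof.
  intros Hrho. apply (kottler_root_continuous (fun m => rho ^ 2 * df m (R0 m) ^ 2 / 4)).
  - apply derivable_continuous_pt. eexists. apply level_derive.
  - exact (rr_ge_r0 rho Hrho).
  - exact (Rr_root_locally rho Hrho).
Qed.

Definition dRr rho := (2 / rr rho ^ (n - 1) + rho ^ 2 * F0 * dF / 2) / Dr rho.

Lemma Rr_derive rho : 0 <= rho -> derivable_pt_lim (fun m => Rr m rho) mu (dRr rho).
Proof.
  intros Hrho. apply (kottler_root_derive (fun m => rho ^ 2 * df m (R0 m) ^ 2 / 4)).
  - apply level_derive.
  - exact (rr_ge_r0 rho Hrho).
  - exact (Rr_continuous rho Hrho).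
  - eapply filter_imp; [| exact (Rr_root_locally rho Hrho)]. now intros m [E _].
Qed.

Definition dDr rho := 2 * (INR n - 1) / rr rho ^ n + kddf mu (rr rho) * dRr rho.

Lemma Dr_derive rho : 0 <= rho -> derivable_pt_lim (fun m => df m (Rr m rho)) mu (dDr rho).
Proof.
  intros Hrho. apply (kdf_along_derive (fun m => Rr m rho)); [exact (rr_pos rho Hrho)|].
  exact (Rr_derive rho Hrho).
Qed.

Definition k_rr rho := 2 * F0 * dF / Dr rho ^ 2 - 2 * F0 ^ 2 * dDr rho / Dr rho ^ 3.
Definition k_N rho := 2 * rr rho * dRr rho.

Lemma g_rr_derive rho : 0 <= rho ->
  derivable_pt_lim (fun m => g_rr n l K R0 Rr m rho) mu (k_rr rho).
Proof.
  intros Hrho. pose proof (Dr_pos rho Hrho) as HD. unfold g_rr.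
  apply is_derive_Reals.
  assert (HDr := proj2 (is_derive_Reals _ _ _) (Dr_derive rho Hrho)).
  assert (HF := proj2 (is_derive_Reals _ _ _) F_derive).
  set (D := fun m => df m (Rr m rho)) in HDr. set (F := fun m => df m (R0 m)) in HF.
  change (is_derive (fun m => F m ^ 2 / D m ^ 2) mu (k_rr rho)).
  assert (HD0 : D mu = Dr rho) by reflexivity. assert (HF0 : F mu = F0) by reflexivity.
  clearbody D F.
  auto_derive.
  - repeat split; [exists dF; exact HF| exists (dDr rho); exact HDr|]. rewrite HD0. nra.
  - replace (Derive (fun x => D x) mu) with (dDr rho) by (symmetry; now apply is_derive_unique).
    replace (Derive (fun x => F x) mu) with dF by (symmetry; now apply is_derive_unique).
    rewrite HD0, HF0. unfold k_rr. field. lra.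
Qed.

Lemma g_N_derive rho : 0 <= rho -> derivable_pt_lim (fun m => g_N Rr m rho) mu (k_N rho).
Proof.
  intros Hrho. unfold g_N, k_N. apply is_derive_Reals.
  assert (HR := proj2 (is_derive_Reals _ _ _) (Rr_derive rho Hrho)).
  set (Rm := fun m => Rr m rho) in HR.
  change (is_derive (fun m => Rm m ^ 2) mu (2 * rr rho * dRr rho)).
  assert (HR0' : Rm mu = rr rho) by reflexivity. clearbody Rm.
  auto_derive; [exists (dRr rho); exact HR|].
  replace (Derive (fun x => Rm x) mu) with (dRr rho) by (symmetry; now apply is_derive_unique).
  rewrite HR0'. ring.
Qed.

(** * The L^2 norm of the variation *)

(* The L^2 density, with [k_rr/g_rr], [k_N/g_N] and [sqrt g_rr] simplified. *)
Definition density rho :=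
  ((2 * dF / F0 - 2 * dDr rho / Dr rho) ^ 2 + INR n * (2 * dRr rho / rr rho) ^ 2)
  * (rho * F0 * rr rho ^ n / Dr rho).

Lemma L2_density_eq (kr kN : R -> R) :
  (forall rho, 0 <= rho ->
     derivable_pt_lim (fun m => g_rr n l K R0 Rr m rho) mu (kr rho) /\
     derivable_pt_lim (fun m => g_N Rr m rho) mu (kN rho)) ->
  forall rho, 0 <= rho -> L2_density n l K R0 Rr mu kr kN rho = density rho.
Proof.
  intros Hd rho Hrho. destruct (Hd rho Hrho) as [Hkr HkN]. unfold L2_density.
  rewrite (uniqueness_limite _ _ _ _ Hkr (g_rr_derive rho Hrho)).
  rewrite (uniqueness_limite _ _ _ _ HkN (g_N_derive rho Hrho)).
  pose proof (Dr_pos rho Hrho). pose proof (rr_pos rho Hrho). pose proof F0_pos.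
  change (g_rr n l K R0 Rr mu rho) with (F0 ^ 2 / Dr rho ^ 2).
  change (g_N Rr mu rho) with (rr rho ^ 2).
  replace (F0 ^ 2 / Dr rho ^ 2) with ((F0 / Dr rho) ^ 2) by (field; lra).
  rewrite sqrt_pow2 by (apply Rdiv_le_0_compat; lra).
  unfold density, k_rr, k_N. fold (rr rho). field. lra.
Qed.

Lemma density_nonneg rho : 0 <= rho -> 0 <= density rho.
Proof.
  intros Hrho. pose proof (Dr_pos rho Hrho). pose proof (rr_pos rho Hrho). pose proof F0_pos.
  pose proof INR_n_ge2. unfold density. apply Rmult_le_pos.
  - pose proof (pow2_ge_0 (2 * dF / F0 - 2 * dDr rho / Dr rho)).
    pose proof (pow2_ge_0 (2 * dRr rho / rr rho)). nra.
  - apply Rdiv_le_0_compat; [| lra]. apply Rmult_le_pos; [nra| apply pow_le; lra].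
Qed.

(* [Rr mu rho] is unconstrained for [rho < 0]; composing with [Rabs] gives a function
   continuous on all of R, as the Riemann integrals over [0, b] require. *)
Lemma rr_abs_continuous y : continuity_pt (fun y => rr (Rabs y)) y.
Proof.
  pose proof (rr_ge_r0 (Rabs y) (Rabs_pos y)). pose proof r0_pos.
  apply (implicit_root_continuous (fun p x => f mu x - p ^ 2 * F0 ^ 2 / 4) _ y 1); [lra| | | |].
  - apply filter_forall. intros p. rewrite rr_level, pow2_abs by apply Rabs_pos.
    split; [ring| intros x Hx].
    pose proof (kf_increasing_beyond_root mu r0 (rr (Rabs p)) x Hmu (HR0 mu Hmu)
                  (rr_ge_r0 _ (Rabs_pos p)) Hx).
    rewrite rr_level, pow2_abs in H1 by apply Rabs_pos. lra.
  - intros x1 x2 Hx. pose proof (kf_increasing_beyond_r0 x1 x2 ltac:(lra)). lra.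
  - intros eps Heps.
    assert (Hc : continuity_pt (fun p => p ^ 2 * F0 ^ 2 / 4) y).
    { apply continuity_pt_filterlim, (ex_derive_continuous (V := R_NormedModule) (fun p => p ^ 2 * F0 ^ 2 / 4)).
      auto_derive. exact I. }
    eapply filter_imp; [| exact (proj1 (continuity_pt_locally _ y) Hc (mkposreal eps Heps))].
    intros p Hp x _. change (Rabs (p ^ 2 * F0 ^ 2 / 4 - y ^ 2 * F0 ^ 2 / 4) < eps) in Hp.
    replace (f mu x - p ^ 2 * F0 ^ 2 / 4 - (f mu x - y ^ 2 * F0 ^ 2 / 4))
      with (- (p ^ 2 * F0 ^ 2 / 4 - y ^ 2 * F0 ^ 2 / 4)) by ring.
    now rewrite Rabs_Ropp.
  - intros eps Heps.
    destruct (simple_root_sign_change (fun x => f mu x - y ^ 2 * F0 ^ 2 / 4) (rr (Rabs y))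
                (Dr (Rabs y))) with (eps := eps) as [h [Hh [Hneg _]]].
    + rewrite rr_level, pow2_abs by apply Rabs_pos. ring.
    + apply kf_sub_derive. lra.
    + exact (Dr_pos _ (Rabs_pos y)).
    + exact Heps.
    + exists (rr (Rabs y) - h). split; [lra| exact Hneg].
Qed.

Ltac continuity_pt_rational :=
  repeat match goal with
  | |- continuity_pt (fun _ => _) _ => apply continuity_pt_const; intros ? ?; reflexivity
  | |- continuity_pt (fun y => y) _ => apply derivable_continuous_pt, derivable_pt_id
  | |- continuity_pt (fun y => @?a y + @?b y) _ => apply (continuity_pt_plus a b)
  | |- continuity_pt (fun y => @?a y - @?b y) _ => apply (continuity_pt_minus a b)
  | |- continuity_pt (fun y => @?a y * @?b y) _ => apply (continuity_pt_mult a b)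
  | |- continuity_pt (fun y => @?a y / @?b y) _ => apply (continuity_pt_div a b)
  | |- continuity_pt (fun y => @?a y ^ ?k) _ =>
      apply (continuity_pt_comp a (fun z => z ^ k)); [| apply derivable_continuous_pt, derivable_pt_pow]
  | |- continuity_pt (fun y => Rabs y) _ => apply Rcontinuity_abs
  | H : continuity_pt ?g ?x |- continuity_pt ?g ?x => exact H
  end.

Lemma density_abs_continuous y : continuity_pt (fun y => density (Rabs y)) y.
Proof.
  pose proof (rr_abs_continuous y) as Hc.
  pose proof (rr_pos (Rabs y) (Rabs_pos y)). pose proof (Dr_pos (Rabs y) (Rabs_pos y)).
  pose proof F0_pos.
  unfold density, dDr, dRr, Dr, kddf, kdf in *.
  continuity_pt_rational; first [apply pow_nonzero; lra| lra].
Qed.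

Lemma kf_le_quadratic x : r0 <= x -> f mu x <= x ^ 2 / l ^ 2 + (1 + 2 * Rabs mu / r0 ^ (n - 1)).
Proof.
  intros Hx. pose proof r0_pos. pose proof IZR_K_bounds.
  assert (Hr0n : 0 < r0 ^ (n - 1)) by (apply pow_lt; lra).
  assert (Hpow : r0 ^ (n - 1) <= x ^ (n - 1)) by (apply pow_incr; lra).
  pose proof (Rabs_div_le (2 * mu) _ _ (conj Hr0n Hpow)) as Hq.
  rewrite Rabs_mult, (Rabs_pos_eq 2) in Hq by lra.
  pose proof (Rle_abs (- (2 * mu / x ^ (n - 1)))) as Habs. rewrite Rabs_Ropp in Habs.
  unfold kf. lra.
Qed.

Lemma rr_tends_to_infinity : filterlim rr (Rbar_locally p_infty) (Rbar_locally p_infty).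
Proof.
  intros P [M HM]. pose proof F0_pos as HF0. pose proof r0_pos.
  set (A := 1 + 2 * Rabs mu / r0 ^ (n - 1)).
  assert (HA : 1 <= A).
  { assert (0 <= 2 * Rabs mu / r0 ^ (n - 1))
      by (apply Rdiv_le_0_compat; [pose proof (Rabs_pos mu); lra| apply pow_lt; lra]).
    unfold A; lra. }
  assert (HMl : 0 <= Rabs M / l) by (apply Rdiv_le_0_compat; [apply Rabs_pos| lra]).
  exists (2 * (Rabs M / l + A) / F0). intros rho Hrho. apply HM.
  assert (Hrho' : Rabs M / l + A < rho * F0 / 2) by (apply Rlt_div_l in Hrho; lra).
  assert (Hrho0 : 0 <= rho)
    by (pose proof (Rdiv_le_0_compat (2 * (Rabs M / l + A)) F0 ltac:(lra) HF0); lra).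
  destruct (Rlt_or_le M (rr rho)) as [Hlt|Hle]; [exact Hlt| exfalso].
  pose proof (rr_pos rho Hrho0). pose proof (Rle_abs M).
  assert (Hsq : (rr rho / l) ^ 2 <= (Rabs M / l) ^ 2) by (apply pow_incr; split;
    [apply Rdiv_le_0_compat; lra| apply Rmult_le_compat_r; [left; apply Rinv_0_lt_compat|]; lra]).
  pose proof (kf_le_quadratic (rr rho) (rr_ge_r0 rho Hrho0)) as Hf.
  rewrite rr_level in Hf by exact Hrho0. fold A in Hf.
  replace (rr rho ^ 2 / l ^ 2) with ((rr rho / l) ^ 2) in Hf by (field; lra).
  replace (rho ^ 2 * F0 ^ 2 / 4) with ((rho * F0 / 2) ^ 2) in Hf by field.
  nra.
Qed.

Lemma dRr_level rho : 0 <= rho ->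
  dRr rho * Dr rho = 2 / rr rho ^ (n - 1) + 2 * f mu (rr rho) * dF / F0.
Proof.
  intros Hrho. pose proof (Dr_pos rho Hrho). pose proof F0_pos.
  pose proof (rr_pos rho Hrho). rewrite rr_level by exact Hrho. unfold dRr.
  field. repeat split; try apply pow_nonzero; lra.
Qed.

Lemma rr_eventually (P : R -> Prop) :
  Rbar_locally p_infty P -> Rbar_locally p_infty (fun rho => 1 <= rho /\ P (rr rho)).
Proof.
  intros HP. apply filter_and; [exists 1; intros; lra| exact (rr_tends_to_infinity P HP)].
Qed.

Lemma volume_eventually_ge :
  Rbar_locally p_infty (fun rho => F0 * l ^ 2 / 3 <= rho * F0 * rr rho ^ n / Dr rho).
Proof.
  pose proof F0_pos. assert (Hl2 : 0 < l ^ 2) by (apply pow_lt; lra).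
  assert (Hlarge : Rbar_locally p_infty (fun x => df mu x <= 3 * x / l ^ 2 /\ 1 <= x))
    by (apply filter_and; [apply kdf_eventually_le| exists 1; intros; lra]).
  eapply filter_imp; [| exact (rr_eventually _ Hlarge)].
  intros rho [Hrho [HD Hx1]]. pose proof (Dr_pos rho ltac:(lra)) as HD0. fold (Dr rho) in HD.
  set (x := rr rho) in *. set (D := Dr rho) in *.
  assert (Hxn : x <= x ^ n) by (rewrite pow_pred_mul; pose proof (pow_R1_Rle x (n - 1) Hx1); nra).
  apply (Rle_div_r _ _ D); [lra|].
  apply (Rle_trans _ (F0 * x)).
  2:{ apply (Rle_trans _ (F0 * x ^ n)); [apply Rmult_le_compat_l; lra|].
      assert (0 <= F0 * x ^ n) by (apply Rmult_le_pos; lra). nra. }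
  replace (F0 * l ^ 2 / 3 * D) with (F0 * (l ^ 2 / 3 * D)) by field.
  apply Rmult_le_compat_l; [lra|]. apply (Rle_trans _ (l ^ 2 / 3 * (3 * x / l ^ 2))).
  - apply Rmult_le_compat_l; [apply Rdiv_le_0_compat|]; lra.
  - right. field. lra.
Qed.

(* When dF <> 0 the level term 2 f dF / F0 ~ rr^2 dominates in dRr * Dr ~ dRr * rr. *)
Lemma dRr_eventually_ge : dF <> 0 ->
  Rbar_locally p_infty (fun rho => Rabs dF / (3 * F0) <= Rabs (2 * dRr rho / rr rho)).
Proof.
  intros HdF. pose proof F0_pos.
  assert (HadF : 0 < Rabs dF) by now apply Rabs_pos_lt.
  assert (Hl2 : 0 < l ^ 2) by (apply pow_lt; lra).
  set (a := F0 / Rabs dF). assert (Ha : 0 < a) by (apply Rdiv_lt_0_compat; lra).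
  assert (HaF : F0 = a * Rabs dF) by (unfold a; field; lra).
  assert (Hlarge : Rbar_locally p_infty (fun x => x ^ 2 / (2 * l ^ 2) <= f mu x /\
     df mu x <= 3 * x / l ^ 2 /\ 1 <= x /\ 2 * l * (a + 1) <= x)).
  { repeat apply filter_and; [apply kf_eventually_ge| apply kdf_eventually_le|
      exists 1; intros; lra| exists (2 * l * (a + 1)); intros; lra]. }
  eapply filter_imp; [| exact (rr_eventually _ Hlarge)].
  intros rho [Hrho [Hf [HD [Hx1 Hxa]]]].
  pose proof (dRr_level rho ltac:(lra)) as HuD. pose proof (Dr_pos rho ltac:(lra)) as HD0.
  fold (Dr rho) in HD.
  set (x := rr rho) in *. set (D := Dr rho) in *. set (u := dRr rho) in *.
  assert (Hfx : 2 * (a + 1) ^ 2 <= f mu x).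
  { assert ((2 * l * (a + 1)) ^ 2 <= x ^ 2) by (apply pow_incr; nra).
    apply (Rle_trans _ (x ^ 2 / (2 * l ^ 2))); [apply (Rle_div_r _ _ (2 * l ^ 2)); nra| exact Hf]. }
  assert (Hlev : 2 <= f mu x * Rabs dF / F0).
  { apply (Rle_div_r _ _ F0); [lra|]. rewrite HaF at 1. nra. }
  assert (HP : 0 < 2 / x ^ (n - 1) <= 2)
    by (pose proof (pow_R1_Rle x (n - 1) Hx1); split; [apply Rdiv_lt_0_compat| apply Rle_div_l; [| nra]]; lra).
  assert (HuD' : f mu x * Rabs dF / F0 <= Rabs (u * D)).
  { rewrite HuD.
    assert (Habs : Rabs (2 * f mu x * dF / F0) = 2 * (f mu x * Rabs dF / F0)).
    { unfold Rdiv. rewrite !Rabs_mult, Rabs_inv, (Rabs_pos_eq 2), (Rabs_pos_eq (f mu x)),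
        (Rabs_pos_eq F0) by nra. ring. }
    pose proof (Rabs_triang_inv (2 * f mu x * dF / F0) (- (2 / x ^ (n - 1)))) as Htri.
    rewrite Rabs_Ropp, (Rabs_pos_eq (2 / x ^ (n - 1))), Habs in Htri by lra.
    replace (2 * f mu x * dF / F0 - - (2 / x ^ (n - 1))) with (2 / x ^ (n - 1) + 2 * f mu x * dF / F0)
      in Htri by ring.
    lra. }
  assert (Hfl : x ^ 2 * Rabs dF / (2 * l ^ 2 * F0) <= f mu x * Rabs dF / F0).
  { replace (x ^ 2 * Rabs dF / (2 * l ^ 2 * F0)) with (x ^ 2 / (2 * l ^ 2) * (Rabs dF / F0)) by (field; lra).
    replace (f mu x * Rabs dF / F0) with (f mu x * (Rabs dF / F0)) by (field; lra).
    apply Rmult_le_compat_r; [apply Rdiv_le_0_compat|]; lra. }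
  replace (2 * u / x) with (2 * (u * D) / (x * D)) by (field; lra).
  rewrite Rabs_div, Rabs_mult, (Rabs_pos_eq 2), (Rabs_pos_eq (x * D)) by nra.
  apply (Rle_div_r _ _ (x * D)); [nra|].
  apply (Rle_trans _ (Rabs dF / (3 * F0) * (3 * x * x / l ^ 2))).
  - apply Rmult_le_compat_l; [apply Rdiv_le_0_compat; lra|].
    replace (3 * x * x / l ^ 2) with (x * (3 * x / l ^ 2)) by (field; lra).
    apply Rmult_le_compat_l; lra.
  - replace (Rabs dF / (3 * F0) * (3 * x * x / l ^ 2)) with (2 * (x ^ 2 * Rabs dF / (2 * l ^ 2 * F0)))
      by (field; lra). lra.
Qed.

Lemma density_eventually_ge : dF <> 0 ->
  exists c, 0 < c /\ Rbar_locally p_infty (fun rho => c <= density rho).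
Proof.
  intros HdF. pose proof F0_pos. pose proof INR_n_ge2.
  assert (Hl2 : 0 < l ^ 2) by (apply pow_lt; lra).
  assert (Hq : 0 < Rabs dF / (3 * F0)) by (apply Rdiv_lt_0_compat; [apply Rabs_pos_lt|]; lra).
  exists (INR n * (Rabs dF / (3 * F0)) ^ 2 * (F0 * l ^ 2 / 3)). split.
  { apply Rmult_lt_0_compat; [apply Rmult_lt_0_compat; [lra| apply pow_lt; lra]|].
    apply Rdiv_lt_0_compat; [apply Rmult_lt_0_compat|]; lra. }
  eapply filter_imp; [| exact (filter_and _ _ (dRr_eventually_ge HdF) volume_eventually_ge)].
  intros rho [Hu Hvol]. unfold density.
  assert (Hsq : (Rabs dF / (3 * F0)) ^ 2 <= (2 * dRr rho / rr rho) ^ 2)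
    by (rewrite <- (pow2_abs (2 * dRr rho / rr rho)); apply pow_incr; lra).
  pose proof (pow2_ge_0 (2 * dF / F0 - 2 * dDr rho / Dr rho)).
  assert (0 <= F0 * l ^ 2 / 3) by (apply Rdiv_le_0_compat; [apply Rmult_le_pos|]; lra).
  apply (Rle_trans _ (INR n * (2 * dRr rho / rr rho) ^ 2 * (rho * F0 * rr rho ^ n / Dr rho))); [| nra].
  apply Rmult_le_compat; [apply Rmult_le_pos; [lra| apply pow2_ge_0]| lra| | exact Hvol].
  apply Rmult_le_compat_l; lra.
Qed.

Lemma Dr_ge_linear rho : 0 < mu -> 0 <= rho -> 2 * rr rho / l ^ 2 <= Dr rho.
Proof.
  intros Hm Hrho. pose proof (rr_pos rho Hrho). pose proof INR_n_ge2.
  assert (0 < rr rho ^ n) by (apply pow_lt; lra).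
  assert (0 <= 2 * (INR n - 1) * mu / rr rho ^ n) by (apply Rdiv_le_0_compat; nra).
  unfold Dr, kdf. lra.
Qed.

Lemma rho_le_linear : 0 < mu -> exists q, 0 < q /\ forall rho, 0 <= rho -> 1 + rho <= q * rr rho.
Proof.
  intros Hm. pose proof r0_pos. pose proof F0_pos. pose proof IZR_K_bounds.
  exists (1 / r0 + 2 / (F0 * l) + 2 / (F0 * r0)). split.
  { assert (0 < 1 / r0) by (apply Rdiv_lt_0_compat; lra).
    assert (0 < 2 / (F0 * l)) by (apply Rdiv_lt_0_compat; nra).
    assert (0 < 2 / (F0 * r0)) by (apply Rdiv_lt_0_compat; nra). lra. }
  intros rho Hrho. pose proof (rr_ge_r0 rho Hrho). set (x := rr rho) in *.
  assert (Hf : rho ^ 2 * F0 ^ 2 / 4 <= (x / l + 1) ^ 2).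
  { rewrite <- rr_level by exact Hrho. fold x. unfold kf.
    assert (0 < 2 * mu / x ^ (n - 1)) by (apply Rdiv_lt_0_compat; [lra| apply pow_lt; lra]).
    assert (0 <= x / l) by (apply Rdiv_le_0_compat; lra).
    replace (x ^ 2 / l ^ 2) with ((x / l) ^ 2) by (field; lra). nra. }
  assert (Hr : rho * F0 / 2 <= x / l + 1).
  { replace (rho ^ 2 * F0 ^ 2 / 4) with ((rho * F0 / 2) ^ 2) in Hf by field.
    assert (0 <= x / l) by (apply Rdiv_le_0_compat; lra). nra. }
  assert (Hrho' : rho <= 2 * x / (F0 * l) + 2 / F0).
  { replace (2 * x / (F0 * l) + 2 / F0) with (2 * (x / l + 1) / F0) by (field; lra).
    apply (Rle_div_r _ _ F0); lra. }
  assert (Hx1 : 1 <= x / r0) by (apply (Rle_div_r _ _ r0); lra).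
  assert (Hx2 : 2 / F0 <= 2 * x / (F0 * r0)).
  { replace (2 * x / (F0 * r0)) with (2 / F0 * (x / r0)) by (field; lra).
    assert (0 < 2 / F0) by (apply Rdiv_lt_0_compat; lra). nra. }
  replace ((1 / r0 + 2 / (F0 * l) + 2 / (F0 * r0)) * x)
    with (x / r0 + 2 * x / (F0 * l) + 2 * x / (F0 * r0)) by (field; lra).
  lra.
Qed.

Lemma kddf_bounded : exists M, 0 <= M /\ forall x, r0 <= x -> Rabs (kddf mu x) <= M.
Proof.
  pose proof r0_pos. pose proof INR_n_ge2.
  assert (0 < r0 ^ S n) by (apply pow_lt; lra).
  exists (2 / l ^ 2 + 2 * INR n * (INR n - 1) * Rabs mu / r0 ^ S n). split.
  { assert (0 < 2 / l ^ 2) by (apply Rdiv_lt_0_compat; [lra| apply pow_lt; lra]).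
    assert (0 <= 2 * INR n * (INR n - 1) * Rabs mu / r0 ^ S n)
      by (apply Rdiv_le_0_compat; [pose proof (Rabs_pos mu); apply Rmult_le_pos; nra| lra]).
    lra. }
  intros x Hx. unfold kddf.
  eapply Rle_trans; [apply Rabs_triang|]. rewrite Rabs_Ropp.
  rewrite Rabs_pos_eq by (apply Rdiv_le_0_compat; [lra| apply pow_lt; lra]).
  apply Rplus_le_compat_l.
  eapply Rle_trans; [apply Rabs_div_le; split; [eassumption| apply pow_incr; lra]|].
  rewrite !Rabs_mult, (Rabs_pos_eq 2), (Rabs_pos_eq (INR n)), (Rabs_pos_eq (INR n - 1)) by lra.
  right. reflexivity.
Qed.

(* With dF = 0, dRr = 2 / (rr^(n-1) Dr) and Dr >= 2 rr / l^2, so both parts of the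
   variation decay like rr^-(n+1). *)
Lemma variation_decay : dF = 0 -> 0 < mu -> exists a, 0 < a /\ forall rho, 0 <= rho ->
  Rabs (2 * dF / F0 - 2 * dDr rho / Dr rho) <= a / (rr rho ^ 2 * rr rho ^ (n - 1)) /\
  Rabs (2 * dRr rho / rr rho) <= a / (rr rho ^ 2 * rr rho ^ (n - 1)).
Proof.
  intros HdF Hm. pose proof INR_n_ge2. pose proof F0_pos.
  destruct kddf_bounded as [M [HM0 HM]].
  assert (Hl2 : 0 < l ^ 2) by (apply pow_lt; lra).
  assert (HMl : 0 <= M * l ^ 2) by nra.
  exists (l ^ 2 * (2 * (INR n - 1) + M * l ^ 2 + 2)). split; [apply Rmult_lt_0_compat; lra|].
  intros rho Hrho. pose proof (rr_pos rho Hrho) as Hx. pose proof (Dr_pos rho Hrho) as HD.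
  pose proof (Dr_ge_linear rho Hm Hrho) as HDl. pose proof (HM _ (rr_ge_r0 rho Hrho)) as HMx.
  set (x := rr rho) in *. set (D := Dr rho) in *. set (P := x ^ (n - 1)).
  assert (HP : 0 < P) by (apply pow_lt; lra).
  set (c := l ^ 2 / (x ^ 2 * P)).
  assert (Hc : 0 < c) by (apply Rdiv_lt_0_compat; [| apply Rmult_lt_0_compat; [apply pow_lt|]]; lra).
  assert (HDl' : 2 * x <= D * l ^ 2) by (apply (Rle_div_l _ _ (l ^ 2)); lra).
  set (s := 2 * x / (l ^ 2 * D)).
  assert (Hs : 0 < s <= 1).
  { split; [apply Rdiv_lt_0_compat; nra| apply (Rle_div_l _ _ (l ^ 2 * D)); nra]. }
  assert (Hu : dRr rho = 2 / (P * D)) by (unfold dRr; fold x D P; rewrite HdF; field; lra).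
  assert (E1 : 2 * dF / F0 - 2 * dDr rho / D = - (s * c * (2 * (INR n - 1) + kddf mu x * l ^ 2 * s))).
  { unfold dDr. fold x. rewrite Hu, HdF, pow_pred_mul. fold P. unfold s, c. field. repeat split; lra. }
  assert (E2 : 2 * dRr rho / x = s * c * 2) by (rewrite Hu; unfold s, c; field; repeat split; lra).
  replace (l ^ 2 * (2 * (INR n - 1) + M * l ^ 2 + 2) / (x ^ 2 * P))
    with (c * (2 * (INR n - 1) + M * l ^ 2 + 2)) by (unfold c; field; lra).
  rewrite E1, E2, Rabs_Ropp, !Rabs_mult, (Rabs_pos_eq s), (Rabs_pos_eq c), (Rabs_pos_eq 2) by lra.
  assert (Hk : Rabs (2 * (INR n - 1) + kddf mu x * l ^ 2 * s) <= 2 * (INR n - 1) + M * l ^ 2).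
  { eapply Rle_trans; [apply Rabs_triang|]. rewrite Rabs_pos_eq by lra.
    rewrite !Rabs_mult, (Rabs_pos_eq (l ^ 2)), (Rabs_pos_eq s) by lra.
    pose proof (Rabs_pos (kddf mu x)).
    assert (Rabs (kddf mu x) * l ^ 2 * s <= M * l ^ 2 * 1) by (apply Rmult_le_compat; nra).
    lra. }
  pose proof (Rabs_pos (2 * (INR n - 1) + kddf mu x * l ^ 2 * s)).
  split; [apply (Rle_trans _ (1 * c * (2 * (INR n - 1) + M * l ^ 2))); [| lra]| nra].
  apply Rmult_le_compat; nra.
Qed.

Lemma volume_le rho : 0 < mu -> 0 <= rho ->
  0 <= rho * F0 * rr rho ^ n / Dr rho <= rho * (F0 * l ^ 2 * rr rho ^ (n - 1) / 2).
Proof.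
  intros Hm Hrho. pose proof F0_pos. pose proof (rr_pos rho Hrho). pose proof (Dr_pos rho Hrho).
  pose proof (Dr_ge_linear rho Hm Hrho) as HDl.
  assert (Hl2 : 0 < l ^ 2) by (apply pow_lt; lra).
  assert (0 < rr rho ^ (n - 1)) by (apply pow_lt; lra).
  split; [apply Rdiv_le_0_compat; [apply Rmult_le_pos; [apply Rmult_le_pos|apply pow_le]|]; lra|].
  rewrite pow_pred_mul. apply (Rle_div_l _ _ (Dr rho)); [lra|].
  assert (0 <= rho * F0 * rr rho ^ (n - 1)) by (apply Rmult_le_pos; [apply Rmult_le_pos|]; lra).
  apply (Rle_div_l _ _ (l ^ 2)) in HDl; [| lra]. nra.
Qed.

Lemma density_le_inverse_square : dF = 0 -> 0 < mu ->
  exists C, 0 <= C /\ forall rho, 0 <= rho -> density rho <= C / (1 + rho) ^ 2.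
Proof.
  intros HdF Hm. pose proof INR_n_ge2. pose proof F0_pos. pose proof r0_pos.
  destruct (variation_decay HdF Hm) as [a [Ha Hdec]].
  destruct (rho_le_linear Hm) as [q [Hq Hlin]].
  assert (Hl2 : 0 < l ^ 2) by (apply pow_lt; lra).
  assert (Hr0n : 0 < r0 ^ n) by (apply pow_lt; lra).
  exists ((1 + INR n) * a ^ 2 * F0 * l ^ 2 * q ^ 3 / (2 * r0 ^ n)). split.
  { apply Rdiv_le_0_compat; [| lra]. repeat apply Rmult_le_pos; try lra; apply pow_le; lra. }
  intros rho Hrho. pose proof (rr_pos rho Hrho) as Hx. pose proof (Dr_pos rho Hrho) as HD.
  pose proof (rr_ge_r0 rho Hrho). destruct (volume_le rho Hm Hrho) as [Hvol0 Hvol].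
  destruct (Hdec rho Hrho) as [HT1 HT2]. specialize (Hlin rho Hrho).
  unfold density. set (x := rr rho) in *. set (D := Dr rho) in *. set (P := x ^ (n - 1)) in *.
  set (T1 := 2 * dF / F0 - 2 * dDr rho / D) in *. set (T2 := 2 * dRr rho / x) in *.
  assert (HP : 0 < P) by (apply pow_lt; lra).
  assert (HxP : r0 ^ n <= x * P) by (unfold P; rewrite <- pow_pred_mul; apply pow_incr; lra).
  set (S := (1 + INR n) * a ^ 2 / (x ^ 2 * P) ^ 2).
  assert (Hbr : T1 ^ 2 + INR n * T2 ^ 2 <= S).
  { assert (T1 ^ 2 <= (a / (x ^ 2 * P)) ^ 2) by now apply pow_maj_Rabs.
    assert (T2 ^ 2 <= (a / (x ^ 2 * P)) ^ 2) by now apply pow_maj_Rabs.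
    replace S with ((1 + INR n) * (a / (x ^ 2 * P)) ^ 2) by (unfold S; field; lra). nra. }
  assert (Hcube : rho * (1 + rho) ^ 2 <= (q * x) ^ 3).
  { replace ((q * x) ^ 3) with (q * x * (q * x) ^ 2) by ring.
    apply Rmult_le_compat; [lra| apply pow2_ge_0| lra| apply pow_incr; lra]. }
  apply (Rle_div_r _ _ ((1 + rho) ^ 2)); [apply pow_lt; lra|].
  assert (0 <= S) by (unfold S; apply Rdiv_le_0_compat; [nra| apply pow_lt; nra]).
  apply (Rle_trans _ (S * (rho * (F0 * l ^ 2 * P / 2)) * (1 + rho) ^ 2)).
  { apply Rmult_le_compat_r; [apply pow2_ge_0|]. apply Rmult_le_compat; nra. }
  apply (Rle_trans _ (S * (F0 * l ^ 2 * P / 2) * (q * x) ^ 3)).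
  { replace (S * (rho * (F0 * l ^ 2 * P / 2)) * (1 + rho) ^ 2)
      with (S * (F0 * l ^ 2 * P / 2) * (rho * (1 + rho) ^ 2)) by ring.
    apply Rmult_le_compat_l; [| exact Hcube].
    apply Rmult_le_pos; [lra| apply Rdiv_le_0_compat; [repeat apply Rmult_le_pos|]; lra]. }
  replace (S * (F0 * l ^ 2 * P / 2) * (q * x) ^ 3)
    with ((1 + INR n) * a ^ 2 * F0 * l ^ 2 * q ^ 3 / (2 * (x * P))) by (unfold S; field; lra).
  unfold Rdiv. apply Rmult_le_compat_l; [repeat apply Rmult_le_pos; try lra; apply pow_le; lra|].
  apply Rinv_le_contravar; lra.
Qed.

Lemma variation_in_L2_iff (kr kN : R -> R) :
  (forall rho, 0 <= rho ->
     derivable_pt_lim (fun m => g_rr n l K R0 Rr m rho) mu (kr rho) /\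
     derivable_pt_lim (fun m => g_N Rr m rho) mu (kN rho)) ->
  variation_in_L2 n l K R0 Rr mu kr kN <-> dF = 0.
Proof.
  intros Hd. unfold variation_in_L2.
  assert (Heq := L2_density_eq kr kN Hd).
  split.
  - intros HL. destruct (Req_dec dF 0) as [E|E]; [exact E| exfalso].
    destruct (density_eventually_ge E) as [c [Hc Hlow]].
    apply (not_finite_integral_of_eventual_lower_bound density c Hc density_nonneg Hlow).
    apply (finite_integral_0_inf_ext _ _ Heq HL).
  - intros HdF.
    assert (Hm : 0 < mu).
    { destruct (proj1 dF_eq0_iff HdF) as [HK1 _]. apply (proj1 Hmu). now right. }
    destruct (density_le_inverse_square HdF Hm) as [C [HC Hle]].
    apply (finite_integral_0_inf_ext (fun rho => density (Rabs rho))).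
    { intros rho Hrho. rewrite Rabs_pos_eq by exact Hrho. symmetry. now apply Heq. }
    apply (finite_integral_of_inverse_square_bound _ C HC density_abs_continuous).
    intros rho Hrho. rewrite Rabs_pos_eq by exact Hrho. now apply Hle.
Qed.

End Kottler.

Theorem mainTheorem3 (n : nat) (l : R) (K : Z) (mu : R)
  (R0 : R -> R) (Rr : R -> R -> R) :
  (2 <= n)%nat -> 0 < l -> (K = (-1)%Z \/ K = 0%Z \/ K = 1%Z) ->
  admissible n l K mu ->
  (forall m, admissible n l K m -> is_r0 n l K m (R0 m)) ->
  (forall m, admissible n l K m -> forall rho, 0 <= rho ->
      R0 m <= Rr m rho /\
      rho ^ 2 = 4 * kf n l K m (Rr m rho) / (kdf n l K m (R0 m)) ^ 2) ->
  (exists dF, derivable_pt_lim (fun m => kdf n l K m (R0 m)) mu dF) /\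
  (exists kr kN : R -> R, forall rho, 0 <= rho ->
      derivable_pt_lim (fun m => g_rr n l K R0 Rr m rho) mu (kr rho) /\
      derivable_pt_lim (fun m => g_N Rr m rho) mu (kN rho)) /\
  (forall (dF : R) (kr kN : R -> R),
      derivable_pt_lim (fun m => kdf n l K m (R0 m)) mu dF ->
      (forall rho, 0 <= rho ->
         derivable_pt_lim (fun m => g_rr n l K R0 Rr m rho) mu (kr rho) /\
         derivable_pt_lim (fun m => g_N Rr m rho) mu (kN rho)) ->
      (variation_in_L2 n l K R0 Rr mu kr kN <-> dF = 0) /\
      (dF = 0 <-> (K = 1%Z /\ mu = mu_c n l)) /\
      (K = 1%Z -> (mu = mu_c n l <-> R0 mu = l * sqrt ((INR n - 1) / (INR n + 1)))) /\
      ((K = 0%Z \/ K = (-1)%Z) -> ~ variation_in_L2 n l K R0 Rr mu kr kN)).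
Proof.
  intros Hn Hl HK Hmu HR0 HRr.
  pose proof (F_derive n l K Hn Hl HK R0 HR0 mu Hmu) as HF.
  split; [eexists; exact HF|].
  split.
  { exists (k_rr n l K R0 mu Rr), (k_N n l K R0 mu Rr). intros rho Hrho. split.
    - exact (g_rr_derive n l K Hn Hl HK R0 HR0 mu Hmu Rr HRr rho Hrho).
    - exact (g_N_derive n l K Hn Hl HK R0 HR0 mu Hmu Rr HRr rho Hrho). }
  intros dF' kr kN HdF' Hd.
  rewrite (uniqueness_limite _ _ _ _ HdF' HF).
  pose proof (variation_in_L2_iff n l K Hn Hl HK R0 HR0 mu Hmu Rr HRr kr kN Hd) as HL2.
  pose proof (dF_eq0_iff n l K Hn Hl HK R0 HR0 mu Hmu) as HdF0.
  split; [exact HL2|]. split; [exact HdF0|]. split.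
  - exact (mu_c_iff_critical_radius n l K Hn Hl R0 HR0 mu Hmu).
  - intros HK01 HL. apply HL2, HdF0 in HL. destruct HL as [HK1 _].
    destruct HK01 as [E|E]; rewrite HK1 in E; discriminate.
Qed.
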